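(* For any $F\in\mathscr{F}_1$, $i\in[F]$ and $s\in\mathcal{S}$, letting $f_i(s)=\gamma(s_1)\gamma(s_2)\cdots\gamma(s_\rho)$ be the $\gamma$-decomposition of $f_i(s)$: (i) $\mathcal{S}_{F,i}(\lambda)\ne\emptyset$ if and only if $f_i(s_1)=\gamma(s_1)=\lambda$; (ii) for any $r=1,\dots,\rho$, if $r\ge2$ or $|\mathcal{P}^2_{F,i}|=2$, then $|\gamma(s_r)|\ge2$; (iii) for any $r=2,\dots,\rho$, writing $\gamma(s_r)=g_1g_2\cdots g_l$, we have $g_1g_2\in\bar{\mathcal{P}}^2_{F,i}(f_i(s_{r-1}))$.
   Context: $\mathcal{S}$ is a finite source alphabet with $|\mathcal{S}|\ge 2$ and $\mathcal{C}=\{0,1\}$; $\mathcal{A}^k,\mathcal{A}^{\ast},\mathcal{A}^{+}$ are sequences of length $k$, finite, positive finite length; $\lambda$ empty sequence; $\preceq$ prefix, $\prec$ proper prefix; $\mathrm{suff}(x_1\cdots x_n)=x_2\cdots x_n$. A code-tuple $F$ with $m\ge1$ code tables consists of maps $f_i:\mathcal{S}\to\mathcal{C}^{\ast}$ and $\tau_i:\mathcal{S}\to\{0,\dots,m-1\}$, $i\in[F]=\{0,\dots,m-1\}$. $f_i^{\ast}(\lambda)=\lambda$, $f_i^{\ast}(\pmb{x})=f_i(x_1)f^{\ast}_{\tau_i(x_1)}(\mathrm{suff}(\pmb{x}))$. $\mathcal{S}_{F,i}(\pmb{b})=\{s:f_i(s)=\pmb{b}\}$. For integer $k\ge0$, $\pmb{b}\in\mathcal{C}^{\ast}$: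 $\mathcal{P}^k_{F,i}(\pmb{b})$ is the set of $\pmb{c}\in\mathcal{C}^k$ such that some $\pmb{x}=x_1\cdots x_n\in\mathcal{S}^{+}$ has $f_i^{\ast}(\pmb{x})\succeq\pmb{b}\pmb{c}$ and $f_i(x_1)\succeq\pmb{b}$; $\bar{\mathcal{P}}^k_{F,i}(\pmb{b})$ the same with $f_i(x_1)\succ\pmb{b}$; $\mathcal{P}^k_{F,i}=\mathcal{P}^k_{F,i}(\lambda)$. $F\in\mathscr{F}_{2\text{-}\mathrm{dec}}$ if $\mathcal{P}^2_{F,\tau_i(s)}\cap\bar{\mathcal{P}}^2_{F,i}(f_i(s))=\emptyset$ for all $i,s$, and $\mathcal{P}^2_{F,\tau_i(s)}\cap\mathcal{P}^2_{F,\tau_i(s')}=\emptyset$ whenever $s\ne s'$, $f_i(s)=f_i(s')$. Fix $\mu:\mathcal{S}\to(0,1]$ with $\sum_s\mu(s)=1$; $Q_{i,j}(F)=\sum_{s:\tau_i(s)=j}\mu(s)$; $F\in\mathscr{F}_{\mathrm{reg}}$ if $\pmb{\pi}Q(F)=\pmb{\pi}$, $\sum_i\pi_i=1$ has a unique solution. $\mathscr{F}_1=\{F\in\mathscr{F}_{\mathrm{reg}}\cap\mathscr{F}_{2\text{-}\mathrm{dec}}:\mathcal{P}^1_{F,i}=\{0,1\}\ \forall i\in[F]\}$. $\gamma$-decomposition: for $F\in\mathscr{F}_1$, $i\in[F]$, $s\in\mathcal{S}$, the symbols $s'$ with $f_i(s')\prec f_i(s)$ have pairwise distinct codewords; list them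 together with $s$ as $s_1,\dots,s_\rho$ with $s_\rho=s$ and $f_i(s_1)\prec f_i(s_2)\prec\cdots\prec f_i(s_\rho)$, and define $\gamma(s_1)=f_i(s_1)$ and $\gamma(s_r)\in\mathcal{C}^{\ast}$ by $f_i(s_r)=f_i(s_{r-1})\gamma(s_r)$ for $r\ge2$, so that $f_i(s)=\gamma(s_1)\cdots\gamma(s_\rho)$. *)

From HB Require Import structures.
From mathcomp Require Import all_boot all_order all_algebra.
From mathcomp Require Import boolp reals.

Set Implicit Arguments.
Unset Strict Implicit.
Unset Printing Implicit Defensive.
Import Order.TTheory GRing.Theory Num.Theory.

(* Code alphabet C = bool (false = 0, true = 1); sequences are seq bool. *)

Section CodeTuple.
Variables (S : finType) (m : nat).
Variables (f : 'I_m -> S -> seq bool) (tau : 'I_m -> S -> 'I_m).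

Definition pprefix (b c : seq bool) : bool := prefix b c && (size b < size c).

Fixpoint fstar (i : 'I_m) (x : seq S) : seq bool :=
  match x with
  | [::] => [::]
  | a :: x' => f i a ++ fstar (tau i a) x'
  end.

Definition Sset (i : 'I_m) (b : seq bool) : {set S} := [set s | f i s == b].

Definition Pk (k : nat) (i : 'I_m) (b c : seq bool) : Prop :=
  size c = k /\ exists (x1 : S) (xs : seq S),
    prefix (b ++ c) (fstar i (x1 :: xs)) /\ prefix b (f i x1).

Definition Pbark (k : nat) (i : 'I_m) (b c : seq bool) : Prop :=
  size c = k /\ exists (x1 : S) (xs : seq S),
    prefix (b ++ c) (fstar i (x1 :: xs)) /\ pprefix b (f i x1).

Definition Pset (k : nat) (i : 'I_m) (b : seq bool) : {set k.-tuple bool} :=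
  [set c : k.-tuple bool | `[< Pk k i b c >]].

Definition two_dec : Prop :=
  (forall (i : 'I_m) (s : S) (c : seq bool),
      ~ (Pk 2 (tau i s) [::] c /\ Pbark 2 i (f i s) c)) /\
  (forall (i : 'I_m) (s s' : S), s != s' -> f i s = f i s' ->
      forall c : seq bool, ~ (Pk 2 (tau i s) [::] c /\ Pk 2 (tau i s') [::] c)).

Section Reg.
Variables (R : realType) (mu : S -> R).
Local Open Scope ring_scope.

Definition Qmat : 'M[R]_m :=
  \matrix_(i < m, j < m) \sum_(s : S | tau i s == j) mu s.

Definition regular : Prop :=
  exists! pi : 'rV[R]_m, pi *m Qmat = pi /\ \sum_(j < m) pi 0 j = 1%R.

Definition F1 : Prop :=
  regular /\ two_dec /\ forall i : 'I_m, Pset 1 i [::] = setT.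
End Reg.

Definition gamma_decomp (i : 'I_m) (s : S) (ss : seq S) : Prop :=
  uniq ss /\
  (forall s' : S, s' \in ss <-> (pprefix (f i s') (f i s) \/ s' = s)) /\
  sorted (fun a b => pprefix (f i a) (f i b)) ss /\
  last s ss = s.

(* gamma(s_{r+1}) (0-indexed r) for the decomposition ss of f_i(s) *)
Definition gamma (i : 'I_m) (s : S) (ss : seq S) (r : nat) : seq bool :=
  match r with
  | 0 => f i (nth s ss 0)
  | r'.+1 => drop (size (f i (nth s ss r'))) (f i (nth s ss r))
  end.

End CodeTuple.

From HB Require Import structures.
From mathcomp Require Import all_boot all_order all_algebra.
From mathcomp Require Import boolp reals.
Import Order.TTheory GRing.Theory Num.Theory.

Set Implicit Arguments.
Unset Strict Implicit.
Unset Printing Implicit Defensive.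

(* Since every table can start an encoding with either bit, every encoded
   string can be continued by any bit after appending source symbols.  So if
   gamma(s_r) were a single bit c for some r >= 2, a continuation c d of
   f_i(s_{r-1}) through s_r would also lie in P^2 of table tau_i(s_{r-1}),
   against 2-decodability; the same continuation gives (iii).  For r = 1, a
   codeword of length at most 1 forces a third element into P^2_{F,i}: a
   codeword c contributes both c0 and c1, while an empty codeword for s_1 makes
   P^2 of tau_i(s_1) a proper subset of P^2_{F,i}, the missing element being
   supplied by any other symbol through one of the two conditions of
   2-decodability.  Part (i) holds because s_1 has the shortest codeword among
   the symbols listed, which include all symbols with the empty codeword. *)

Lemma pprefix_trans : transitive pprefix.
Proof.
move=> y x z /andP[xy lt_xy] /andP[yz lt_yz].
by rewrite /pprefix (prefix_trans xy yz) (ltn_trans lt_xy lt_yz).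
Qed.

Section CodeTuple.
Variables (S : finType) (m : nat).
Variables (f : 'I_m -> S -> seq bool) (tau : 'I_m -> S -> 'I_m).

Local Notation P2 j := (Pset f tau 2 j [::]).

Lemma Pset_nilP k j (c : k.-tuple bool) :
  c \in Pset f tau k j [::] <->
  exists x1 xs, prefix c (fstar f tau j (x1 :: xs)).
Proof.
rewrite inE; split=> [/asboolP[_ [x1 [xs [pre _]]]] | [x1 [xs pre]]].
  by exists x1, xs.
by apply/asboolP; split; [exact: size_tuple | exists x1, xs; rewrite prefix0s].
Qed.

Lemma Pset_nil_sub k i a :
  f i a = [::] -> Pset f tau k (tau i a) [::] \subset Pset f tau k i [::].
Proof.
move=> fa; apply/subsetP=> c /Pset_nilP[x1 [xs pre]].
by apply/Pset_nilP; exists a, (x1 :: xs); rewrite /= fa.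
Qed.

Lemma Pbark_codeword k i a b c :
  pprefix (f i a) (f i b) -> prefix (f i a ++ c) (f i b) -> size c = k ->
  Pbark f tau k i (f i a) c.
Proof. by move=> ab pre sc; split=> //; exists b, [::]; rewrite /= cats0. Qed.

Section FirstBitsFull.
Hypothesis P1_full : forall j, Pset f tau 1 j [::] = setT.

Lemma fstar_extend j x d :
  exists y, prefix (fstar f tau j x ++ [:: d]) (fstar f tau j (x ++ y)).
Proof.
elim: x j => [|a x IH] j /=.
  have /Pset_nilP[x1 [xs pre]] : [tuple d] \in Pset f tau 1 j [::].
    by rewrite P1_full inE.
  by exists (x1 :: xs).
have [y pre] := IH (tau j a); exists y.
by rewrite -catA prefix_catr ?eqxx.
Qed.

Lemma codeword_extend j a d :
  exists xs, prefix (f j a ++ [:: d]) (fstar f tau j (a :: xs)).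
Proof. by have [xs] := fstar_extend j [:: a] d; rewrite /= cats0; exists xs.
Qed.

Lemma Pset2_head j c : exists d, [tuple c; d] \in P2 j.
Proof.
have [[|x1 xs] pre] := fstar_extend j [::] c; first by [].
have [y pre'] := fstar_extend j (x1 :: xs) true.
move: pre pre'; case: (fstar f tau j (x1 :: xs)) => [|c' w] //=.
move=> /andP[/eqP <- _] pre'.
exists (head true w); apply/Pset_nilP; exists x1, (xs ++ y).
apply: prefix_trans pre'; rewrite /= eqxx.
by case: w => //= b w; rewrite eqxx prefix0s.
Qed.

Lemma card_Pset2_gt1 j : 1 < #|P2 j|.
Proof.
have [d0 in0] := Pset2_head j false; have [d1 in1] := Pset2_head j true.
by apply/card_gt1P; exists [tuple false; d0], [tuple true; d1].
Qed.

Lemma card_Pset2_singleton i a c : f i a = [:: c] -> 2 < #|P2 i|.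
Proof.
move=> fa.
have inc d : [tuple c; d] \in P2 i.
  have [xs pre] := codeword_extend i a d.
  by apply/Pset_nilP; exists a, xs; rewrite fa in pre.
have [d inN] := Pset2_head i (~~ c).
apply/card_gt2P; exists [tuple c; false], [tuple c; true], [tuple ~~ c; d].
split; first by rewrite !inc.
by split; rewrite -val_eqE /=; case: (c); case: (d).
Qed.

Hypothesis dec : two_dec f tau.

Lemma codeword_gap_gt1 i a b g :
  f i b = f i a ++ g -> g != [::] -> 1 < size g.
Proof.
case: g => [|c [|c' g]] //= fb _; exfalso.
have [d /Pset_nilP[x1 [xs pre]]] := Pset2_head (tau i a) c.
have [ys preb] := codeword_extend i b d.
apply: (dec.1 i a [:: c; d]); split.
  by split=> //; exists x1, xs; rewrite prefix0s.
split=> //; exists b, ys; split; first by rewrite fb -catA in preb.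
by rewrite /pprefix fb prefix_prefix size_cat addn1 ltnSn.
Qed.

Lemma Pset_nil_proper i a :
  1 < #|S| -> f i a = [::] -> P2 (tau i a) \proper P2 i.
Proof.
move=> /card_gt1P[t0 [t1 [_ _ t01]]] fa; apply/properP; split.
  exact: Pset_nil_sub.
have [t ta] : exists t, t != a.
  by case: (eqVneq t0 a) => [<-|]; [exists t1; rewrite eq_sym | exists t0].
case ft: (f i t) => [|c w].
  have [d intd] := Pset2_head (tau i t) false.
  exists [tuple false; d]; first exact: (subsetP (Pset_nil_sub 2 ft)).
  move: intd; rewrite !inE => /asboolP Pt; apply/asboolP => Pa.
  by apply: (dec.2 i a t _ _ [:: false; d]); rewrite 1?eq_sym ?fa ?ft.
have [xs pre] := codeword_extend i t true.
have pre2 : prefix [:: c; head true w] (fstar f tau i (t :: xs)).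
  apply: prefix_trans pre; rewrite ft /= eqxx.
  by case: w {ft} => //= b w; rewrite eqxx prefix0s.
exists [tuple c; head true w]; first by apply/Pset_nilP; exists t, xs.
rewrite inE; apply/asboolP => Pa; apply: (dec.1 i a [:: c; head true w]).
split; rewrite // fa; split=> //; exists t, xs.
by rewrite /pprefix prefix0s ft.
Qed.

Lemma codeword_size_gt1 i a : 1 < #|S| -> #|P2 i| = 2 -> 1 < size (f i a).
Proof.
move=> hS card2; case fa: (f i a) => [|c [|c' w]] //; exfalso.
  have := proper_card (Pset_nil_proper hS fa).
  by rewrite card2 ltnNge card_Pset2_gt1.
by have := card_Pset2_singleton fa; rewrite card2.
Qed.

End FirstBitsFull.

Section GammaDecomposition.
Variables (i : 'I_m) (s : S) (ss : seq S).
Hypothesis hss : gamma_decomp f i s ss.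

Lemma gamma_decomp_pprefix r :
  r.+1 < size ss -> pprefix (f i (nth s ss r)) (f i (nth s ss r.+1)).
Proof. by case: hss => _ [_ [/(sortedP s) sorted_ss _]]; apply: sorted_ss. Qed.

Lemma gamma_decomp_cat r : r.+1 < size ss ->
  f i (nth s ss r.+1) = f i (nth s ss r) ++ gamma f i s ss r.+1 /\
  gamma f i s ss r.+1 != [::].
Proof.
move=> /gamma_decomp_pprefix /andP[/prefixP[g fg]].
rewrite /= fg drop_size_cat //.
by case: g {fg} => [|b g]; rewrite ?cats0 ?ltnn.
Qed.

Lemma gamma_decomp_head_nilP :
  Sset f i [::] != set0 <-> f i (nth s ss 0) = [::].
Proof.
split; last by move=> fs1; apply/set0Pn; exists (nth s ss 0); rewrite inE fs1.
have lt_f : transitive (fun a b => pprefix (f i a) (f i b)).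
  by move=> b a c; apply: pprefix_trans.
case: hss => _ [mem_ss [sorted_ss _]] /set0Pn[t]; rewrite inE => /eqP ft.
have [u u_ss fu] : exists2 u, u \in ss & f i u = [::].
  case fs: (f i s) => [|c w]; first by exists s => //; apply/mem_ss; right.
  by exists t => //; apply/mem_ss; left; rewrite /pprefix ft fs prefix0s.
case: ss u_ss sorted_ss => [|s1 ss'] //=; rewrite inE => /predU1P[<- //|u_ss'].
move=> /(order_path_min lt_f)/allP/(_ u u_ss').
by rewrite fu => /andP[_]; rewrite ltn0.
Qed.

End GammaDecomposition.

End CodeTuple.

Theorem lemma16 (S : finType) (hS : (1 < #|S|)%N) (m : nat) (hm : (0 < m)%N)
  (f : 'I_m -> S -> seq bool) (tau : 'I_m -> S -> 'I_m)
  (R : realType) (mu : S -> R)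
  (hmu : forall s : S, (0 < mu s)%R /\ (mu s <= 1)%R)
  (hmu1 : (\sum_(s : S) mu s)%R = 1%R)
  (hF : F1 f tau mu)
  (i : 'I_m) (s : S) (ss : seq S)
  (hss : gamma_decomp f i s ss) :
  (* (i) *)
  (Sset f i [::] != set0 <-> f i (nth s ss 0) = [::]) /\
  (* (ii) r = r0.+1 ranges over 1..rho *)
  (forall r0 : nat, (r0 < size ss)%N ->
     ((0 < r0)%N \/ #|Pset f tau 2 i [::]| = 2%N) ->
     (2 <= size (gamma f i s ss r0))%N) /\
  (* (iii) r = r0.+1 ranges over 2..rho *)
  (forall r0 : nat, (0 < r0)%N -> (r0 < size ss)%N ->
     exists (g1 g2 : bool) (rest : seq bool),
       gamma f i s ss r0 = [:: g1, g2 & rest] /\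
       Pbark f tau 2 i (f i (nth s ss r0.-1)) [:: g1; g2]).
Proof.
case: hF => _ [dec P1_full].
have gamma_size_gt1 r : r.+1 < size ss -> 1 < size (gamma f i s ss r.+1).
  move=> /(gamma_decomp_cat hss)[fr gr].
  exact: codeword_gap_gt1 P1_full dec _ _ _ _ fr gr.
split; [exact: gamma_decomp_head_nilP | split].
- case=> [|r] lt_r; last by move=> _; exact: gamma_size_gt1.
  by case=> // card2; exact: codeword_size_gt1 P1_full dec _ _ hS card2.
- case=> [|r] // _ lt_r; have := gamma_size_gt1 r lt_r.
  have [fr _] := gamma_decomp_cat hss lt_r.
  case: (gamma f i s ss r.+1) fr => [|g1 [|g2 rest]] // fr _.
  exists g1, g2, rest; split=> //; apply: Pbark_codeword => //.
    exact: gamma_decomp_pprefix.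
  by rewrite fr /= prefix_catr //= !eqxx prefix0s.
Qed.
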